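(* Let $n\ge3$. For a positive integer $k$ let $p_k=k\left(1-3\frac{k-1}{n-1}\right)$ and $q_k=3\left(1-15\frac{k-1}{n-1}+30\frac{(k-1)(k-2)}{(n-1)(n-2)}\right)$. Then: 1. If $1\le k_1<k_2\le n$, then $p_{k_1}q_{k_2}-p_{k_2}q_{k_1}=\frac{3(n+8)}{(n-1)^2(n-2)}(k_1-k_2)G(k_1,k_2)$. 2. If $1\le k_1<k_2<k_3\le n$, then $\sum_{i=1}^3k_i(n+2-3k_i)(k_{i+1}-k_{i+2})G(k_{i+1},k_{i+2})=0$, indices taken mod 3 ($k_4=k_1$, $k_5=k_2$). 3. If $1\le k_1<k_2<k_3<k_4\le n$ and $G(k_2,k_3)\le 0$, then (a) $k_2<\frac{n+2}3$ and $k_3>\frac{n+2}3$; (b) $p_{k_2}>0$ and $p_{k_3}<0$; (c) $G(k_1,k_2)>0$ and $G(k_3,k_4)>0$.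
   Context: For positive integers $k_1,k_2\le n$, $G(k_1,k_2)=(n+2-3k_1)(n+2-3k_2)+6(k_1-1)(k_2-1)+2(n-1)$. *)

From mathcomp Require Import all_boot all_order all_algebra.
Set Implicit Arguments. Unset Strict Implicit. Unset Printing Implicit Defensive.
Import Order.TTheory GRing.Theory Num.Theory.
Local Open Scope ring_scope.

(* G(k1,k2) = (n+2-3k1)(n+2-3k2) + 6(k1-1)(k2-1) + 2(n-1), computed in rat
   (so subtraction is genuine, not truncated). *)
Definition G (n k1 k2 : nat) : rat :=
  (n%:R + 2 - 3 * k1%:R) * (n%:R + 2 - 3 * k2%:R)
  + 6 * (k1%:R - 1) * (k2%:R - 1) + 2 * (n%:R - 1).

Definition p (n k : nat) : rat :=
  k%:R * (1 - 3 * (k%:R - 1) / (n%:R - 1)).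

Definition q (n k : nat) : rat :=
  3 * (1 - 15 * (k%:R - 1) / (n%:R - 1)
       + 30 * (k%:R - 1) * (k%:R - 2) / ((n%:R - 1) * (n%:R - 2))).

(* Write [u_k = n + 2 - 3k], so that [G(k1,k2) = u_k1 u_k2 + 6(k1-1)(k2-1) + 2(n-1)]
   and [p_k = k u_k / (n-1)].  Parts 1 and 2 are identities of rational functions.
   For part 3, the last two summands of [G] are positive, so [G(k2,k3) <= 0] forces
   [u_k2 u_k3 < 0]; since [u] is decreasing this means [u_k2 > 0 > u_k3], which gives
   the position of [k2, k3] relative to [(n+2)/3] and the signs of [p].  Then
   [u_k1 > u_k2 > 0] and [0 > u_k3 > u_k4], so [G(k1,k2)] and [G(k3,k4)] are
   positive. *)
From mathcomp Require Import all_boot all_order all_algebra.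
From mathcomp Require Import ring lra.
Set Implicit Arguments.
Unset Strict Implicit.
Unset Printing Implicit Defensive.

Import Order.TTheory GRing.Theory Num.Theory.
Local Open Scope ring_scope.

Lemma p_factor (n k : nat) : (1 < n)%N ->
  p n k = k%:R * (n%:R + 2 - 3 * k%:R) / (n%:R - 1).
Proof.
move=> n_gt1; have n1_neq0 : n%:R - 1 != 0 :> rat.
  by rewrite subr_eq0 pnatr_eq1 gtn_eqF.
by rewrite /p; field.
Qed.

Lemma pq_cross (n k1 k2 : nat) : (2 < n)%N ->
  p n k1 * q n k2 - p n k2 * q n k1
  = 3 * (n%:R + 8) / ((n%:R - 1) ^+ 2 * (n%:R - 2)) * (k1%:R - k2%:R) * G n k1 k2.
Proof.
move=> n_gt2; have n_ge3 : (3 <= n%:R :> rat) by rewrite (ler_nat rat 3).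
have n1_neq0 : n%:R - 1 != 0 :> rat by apply/eqP => ?; lra.
have n2_neq0 : n%:R - 2 != 0 :> rat by apply/eqP => ?; lra.
by rewrite /p /q /G; field; rewrite n1_neq0 n2_neq0.
Qed.

Lemma G_cyclic_sum (n k1 k2 k3 : nat) :
  k1%:R * (n%:R + 2 - 3 * k1%:R) * (k2%:R - k3%:R) * G n k2 k3
  + k2%:R * (n%:R + 2 - 3 * k2%:R) * (k3%:R - k1%:R) * G n k3 k1
  + k3%:R * (n%:R + 2 - 3 * k3%:R) * (k1%:R - k2%:R) * G n k1 k2 = 0.
Proof. by rewrite /G; ring. Qed.

Section GSign.

Variables (n k1 k2 : nat).
Hypotheses (n_gt1 : (1 < n)%N) (k1_gt0 : (0 < k1)%N) (k12 : (k1 < k2)%N).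

Let N := n%:R : rat.
Let a := k1%:R : rat.
Let b := k2%:R : rat.

Let bounds : [/\ 2 <= N, 1 <= a & a + 1 <= b].
Proof. by rewrite (ler_nat rat 2) (ler_nat rat 1) natr1 ler_nat. Qed.

Lemma G_le0_straddle : G n k1 k2 <= 0 ->
  0 < n%:R + 2 - 3 * k1%:R :> rat /\ n%:R + 2 - 3 * k2%:R < 0 :> rat.
Proof.
rewrite /G -/N -/a -/b => G_le0; case: bounds => n_ge2 a_ge1 ab.
have ab1_ge0 : 0 <= (a - 1) * (b - 1) by apply: mulr_ge0; lra.
have uv_lt0 : (N + 2 - 3 * a) * (N + 2 - 3 * b) < 0 by lra.
split; nra.
Qed.

Lemma G_gt0_below : 0 < n%:R + 2 - 3 * k2%:R :> rat -> 0 < G n k1 k2.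
Proof. rewrite /G -/N -/a -/b => u2_gt0; case: bounds => n_ge2 a_ge1 ab; nra. Qed.

Lemma G_gt0_above : n%:R + 2 - 3 * k1%:R < 0 :> rat -> 0 < G n k1 k2.
Proof. rewrite /G -/N -/a -/b => u1_lt0; case: bounds => n_ge2 a_ge1 ab; nra. Qed.

End GSign.

Theorem lemma3p4 (n : nat) (hn : (3 <= n)%N) :
  (forall k1 k2 : nat, (1 <= k1)%N -> (k1 < k2)%N -> (k2 <= n)%N ->
     p n k1 * q n k2 - p n k2 * q n k1
     = 3 * (n%:R + 8) / ((n%:R - 1) ^+ 2 * (n%:R - 2))
       * (k1%:R - k2%:R) * G n k1 k2)
  /\
  (forall k1 k2 k3 : nat,
     (1 <= k1)%N -> (k1 < k2)%N -> (k2 < k3)%N -> (k3 <= n)%N ->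
     k1%:R * (n%:R + 2 - 3 * k1%:R) * (k2%:R - k3%:R) * G n k2 k3
     + k2%:R * (n%:R + 2 - 3 * k2%:R) * (k3%:R - k1%:R) * G n k3 k1
     + k3%:R * (n%:R + 2 - 3 * k3%:R) * (k1%:R - k2%:R) * G n k1 k2 = 0)
  /\
  (forall k1 k2 k3 k4 : nat,
     (1 <= k1)%N -> (k1 < k2)%N -> (k2 < k3)%N -> (k3 < k4)%N -> (k4 <= n)%N ->
     G n k2 k3 <= 0 ->
     [/\ (k2%:R < (n%:R + 2) / 3 :> rat) /\ ((n%:R + 2) / 3 < k3%:R :> rat),
         (0 < p n k2) /\ (p n k3 < 0)
       & (0 < G n k1 k2) /\ (0 < G n k3 k4)]).
Proof.
have n_gt1 : (1 < n)%N by apply: leq_trans hn.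
split; [by move=> k1 k2 *; apply: pq_cross | split; first by move=> *; apply: G_cyclic_sum].
move=> k1 k2 k3 k4 k1_gt0 k12 k23 k34 _ G23_le0.
have k2_gt0 : (0 < k2)%N by apply: leq_trans k12.
have k3_gt0 : (0 < k3)%N by apply: leq_trans k23.
have [u2_gt0 u3_lt0] := G_le0_straddle n_gt1 k2_gt0 k23 G23_le0.
have n1_gt0 : 0 < n%:R - 1 :> rat by rewrite subr_gt0 ltr1n.
rewrite !p_factor //; split; [split; lra | split | split].
- by rewrite !divr_gt0 ?mulr_gt0 ?ltr0n.
- by rewrite pmulr_llt0 ?invr_gt0 // pmulr_rlt0 ?ltr0n.
- exact: G_gt0_below.
- exact: G_gt0_above.
Qed.
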